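(* Let $n_1>n_2>n_3\geq 2$ be integers. Let $X$ be the set of the following vectors of length $4$: $(j,j,j,0),(j,j,j,1)$ for $j\in\{1,\ldots,n_3\}$; $(n_3+k,n_3+k,1,0),(n_3+k,n_3+k,n_3,1)$ for $k\in\{0,\ldots,n_2-n_3-1\}$; $(n_2+k,1,1,0),(n_2+k,n_2,n_3,1)$ for $k\in\{0,\ldots,n_1-n_2-1\}$; and $(n_1,n_2,n_3,1)$. Let $\mathcal B$ consist of all $3$-element subsets $\{\alpha_1,\alpha_2,\alpha_3\}\subseteq X$ such that for each coordinate $j\in\{1,2,3,4\}$ the set $\{\alpha_{1(j)},\alpha_{2(j)},\alpha_{3(j)}\}$ has exactly $2$ elements, together with the additional triple $\{(1,1,1,0),(n_3,n_3,1,0),(n_3,n_3,n_3,0)\}$. Then the $3$-uniform bi-hypergraph $\mathcal H_{n_1,n_2,n_3}=(X,\mathcal B)$ is a one-realization of $\{n_1,n_2,n_3\}$.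
   Context: A bi-hypergraph $(X,\mathcal B)$ is a mixed hypergraph whose $\mathcal C$-edges and $\mathcal D$-edges both equal $\mathcal B$. A strict $k$-coloring is a partition of $X$ into exactly $k$ nonempty classes such that every edge of $\mathcal B$ contains two vertices of a common class and two vertices of distinct classes. The feasible set is the set of $k$ admitting a strict $k$-coloring; the chromatic spectrum lists, for $k=1,\ldots,\max$ of the feasible set, the number of strict $k$-colorings (as partitions). A one-realization of a set $S$ is a mixed hypergraph whose feasible set is $S$ and whose chromatic spectrum has all entries in $\{0,1\}$. $\alpha_{l(j)}$ denotes the $j$-th entry of $\alpha_l$. *)

From mathcomp Require Import all_boot.
Set Implicit Arguments. Unset Strict Implicit. Unset Printing Implicit Defensive.

Section BiHypergraph.
Variable T : finType.

(* A strict coloring of the bi-hypergraph (X, B), viewed as a partition P of X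
   into nonempty classes: every edge contains two distinct vertices in a common
   class (C-edge condition) and two vertices in distinct classes (D-edge). *)
Definition strict_coloring (X : {set T}) (B : {set {set T}}) (P : {set {set T}}) : bool :=
  partition P X &&
  [forall E in B,
     [exists x in E, exists y in E, (x != y) && (pblock P x == pblock P y)] &&
     [exists x in E, exists y in E, pblock P x != pblock P y]].

Definition num_strict_colorings (X : {set T}) (B : {set {set T}}) (k : nat) : nat :=
  #|[set P : {set {set T}} | strict_coloring X B P && (#|P| == k)]|.

Definition one_realization (X : {set T}) (B : {set {set T}}) (S : seq nat) : Prop :=
  (forall k, (0 < num_strict_colorings X B k) = (k \in S)) /\
  (forall k, num_strict_colorings X B k <= 1).
End BiHypergraph.

Definition vec4 (n : nat) := {ffun 'I_4 -> 'I_n.+1}.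

Definition mkv (n : nat) (s : seq nat) : vec4 n :=
  [ffun i : 'I_4 => inord (nth 0 s i)].

Definition Xlist (n1 n2 n3 : nat) : seq (seq nat) :=
  [seq [:: j; j; j; 0] | j <- iota 1 n3] ++
  [seq [:: j; j; j; 1] | j <- iota 1 n3] ++
  [seq [:: n3 + k; n3 + k; 1; 0] | k <- iota 0 (n2 - n3)] ++
  [seq [:: n3 + k; n3 + k; n3; 1] | k <- iota 0 (n2 - n3)] ++
  [seq [:: n2 + k; 1; 1; 0] | k <- iota 0 (n1 - n2)] ++
  [seq [:: n2 + k; n2; n3; 1] | k <- iota 0 (n1 - n2)] ++
  [:: [:: n1; n2; n3; 1]].

Definition Hvert (n1 n2 n3 : nat) : {set vec4 n1} :=
  [set x | x \in map (mkv n1) (Xlist n1 n2 n3)].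

Definition Hedges (n1 n2 n3 : nat) : {set {set vec4 n1}} :=
  [set E : {set vec4 n1} | (E \subset Hvert n1 n2 n3) && (#|E| == 3) &&
     [forall j : 'I_4, #|[set (x : vec4 n1) j | x in E]| == 2]]
  :|: [set [set mkv n1 [:: 1; 1; 1; 0]; mkv n1 [:: n3; n3; 1; 0];
               mkv n1 [:: n3; n3; n3; 0]]].

From HB Require Import structures.
From mathcomp Require Import all_boot zify.
Set Implicit Arguments. Unset Strict Implicit. Unset Printing Implicit Defensive.

(* The strict colorings of H_{n1,n2,n3} are exactly the partitions of X by the
   value of one of the first three coordinates, which have n1, n2 and n3
   classes; the partition by the fourth coordinate fails on the extra triple. Conversely, any two
   vertices lie in a configuration made of a fixed kernel of eight vertices and
   at most two further pairs of vertices. Written with symbolic values, there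
   are only thirteen such configurations, whatever n1, n2, n3 are, and an
   exhaustive search over set partitions shows that on each of them a strict
   coloring is the partition by a coordinate that can be read off the kernel
   alone. So all pairs of vertices see the same coordinate. *)

Definition two_valued (T : eqType) (x y z : T) : bool :=
  [|| x == y, y == z | x == z] && ~~ ((x == y) && (y == z)).

Lemma card_set3_eq2 (T : finType) (x y z : T) : (#|[set x; y; z]| == 2) = two_valued x y z.
Proof.
rewrite -setUA !cardsU1 cards1 !inE /two_valued.
have [<-|xy] := eqVneq x y; first by case: (x == z).
have [<-|yz] := eqVneq y z; first by rewrite (negbTE xy).
by case: (x == z).
Qed.

Lemma card_set3 (T : finType) (x y z : T) :
  x != y -> y != z -> x != z -> #|[set x; y; z]| = 3.
Proof.
by move=> xy yz xz; rewrite -setUA !cardsU1 cards1 !inE (negbTE xy) (negbTE xz) (negbTE yz).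
Qed.

Lemma imset_set3 (T U : finType) (f : T -> U) (x y z : T) :
  f @: [set x; y; z] = [set f x; f y; f z].
Proof. by rewrite !imsetU !imset_set1. Qed.

Section Partitions.
Variable T : finType.
Implicit Types (D E : {set T}) (P : {set {set T}}).

Definition strict_edge P E : bool :=
  [exists x in E, exists y in E, (x != y) && (pblock P x == pblock P y)] &&
  [exists x in E, exists y in E, pblock P x != pblock P y].

Lemma strict_coloringE D B P :
  strict_coloring D B P = partition P D && [forall E in B, strict_edge P E].
Proof. by []. Qed.

Lemma strict_edge3 P u v w :
  strict_edge P [set u; v; w] -> two_valued (pblock P u) (pblock P v) (pblock P w).
Proof.
case/andP=> /existsP[x /andP[xE /existsP[y /andP[yE /andP[xy /eqP Pxy]]]]].
case/existsP=> x' /andP[x'E /existsP[y' /andP[y'E Pxy']]].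
apply/andP; split.
  move: xE yE xy Pxy; rewrite !inE -!orbA.
  by case/or3P=> /eqP->; case/or3P=> /eqP->; rewrite ?eqxx // => _ ->; rewrite eqxx ?orbT.
apply: contra Pxy' => /andP[/eqP Puv /eqP Pvw].
by move: x'E y'E; rewrite !inE -!orbA; case/or3P=> /eqP->; case/or3P=> /eqP->; rewrite ?Puv ?Pvw.
Qed.

Lemma eq_preim_partition (V W : eqType) (f : T -> V) (g : T -> W) D :
  {in D &, forall x y, (f x == f y) = (g x == g y)} -> preim_partition f D = preim_partition g D.
Proof.
move=> fg; apply: eq_in_imset => x xD; apply/setP => y; rewrite !inE.
by apply: andb_id2l => yD; apply: fg.
Qed.

Lemma pblock_preim_partition (U : eqType) (f : T -> U) D :
  {in D &, forall x y,
    (pblock (preim_partition f D) x == pblock (preim_partition f D) y) = (f x == f y)}.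
Proof.
move=> x y xD yD; have /and3P[/eqP cov triv _] := preim_partitionP f D.
rewrite eq_pblock ?cov // (@pblock_equivalence_partition _ (fun x y => f x == f y)) //.
by split=> // /eqP->.
Qed.

Lemma partition_preimE (U : eqType) P D (f : T -> U) :
  partition P D -> {in D &, forall x y, (pblock P x == pblock P y) = (f x == f y)} ->
  P = preim_partition f D.
Proof. by move=> PD Pf; rewrite -{1}(preim_partition_pblock PD); apply: eq_preim_partition. Qed.

Lemma card_preim_partition (U : finType) (f : T -> U) D :
  #|preim_partition f D| = #|f @: D|.
Proof.
have -> : preim_partition f D = (fun v => [set y in D | f y == v]) @: (f @: D).
  rewrite -imset_comp; apply: eq_imset => x /=.
  by apply/setP => y; rewrite !inE eq_sym.
apply: card_in_imset => _ v /imsetP[x xD ->] _ eq_fx.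
have : x \in [set y in D | f y == f x] by rewrite inE xD eqxx.
by rewrite eq_fx inE => /andP[_ /eqP].
Qed.

Lemma strict_edge_preim (U : finType) (f : T -> U) D E :
  E \subset D -> #|E| = 3 -> #|f @: E| = 2 -> strict_edge (preim_partition f D) E.
Proof.
move=> /subsetP ED cE cfE; apply/andP; split.
  have /dinjectivePn[x xE [y /andP[yx yE] fxy]] : ~~ dinjectiveb f E.
    by apply/dinjectiveP => /imset_injP; rewrite cE cfE.
  apply/existsP; exists x; rewrite xE; apply/existsP; exists y.
  by rewrite yE eq_sym yx pblock_preim_partition ?ED // fxy /=.
have /card_gt1P[_ [_ [/imsetP[x xE ->] /imsetP[y yE ->] fxy]]] : 1 < #|f @: E| by rewrite cfE.
apply/existsP; exists x; rewrite xE; apply/existsP; exists y.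
by rewrite yE pblock_preim_partition ?ED.
Qed.
End Partitions.

Notation triple := (nat * nat * nat)%type.

Section PartitionSearch.
Implicit Types (E : seq triple) (f : seq nat).

Definition edge_max (e : triple) : nat := maxn e.1.1 (maxn e.1.2 e.2).

Definition edge_ok f (e : triple) : bool :=
  two_valued (nth 0 f e.1.1) (nth 0 f e.1.2) (nth 0 f e.2).

Definition prefix_ok E f : bool := all (fun e => (edge_max e < size f) ==> edge_ok f e) E.

(* Partitions of [0, n) in restricted-growth form: vertex i is labelled either
   i itself (a new class) or j < i where j labels itself (an old class). *)
Fixpoint extensions E n f : seq (seq nat) :=
  if n is n'.+1 then
    flatten [seq if prefix_ok E (rcons f c) then extensions E n' (rcons f c) else [::]
            | c <- size f :: [seq j <- iota 0 (size f) | nth 0 f j == j]]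
  else [:: f].

Lemma mem_extensions E k (g : nat -> nat) :
  (forall i, i < k -> g i <= i /\ g (g i) = g i) ->
  (forall e, e \in E -> edge_max e < k -> edge_ok (mkseq g k) e) ->
  mkseq g k \in extensions E k [::].
Proof.
move=> g_canon g_ok; suff: forall n i, i + n = k -> mkseq g k \in extensions E n (mkseq g i).
  by move/(_ k 0 (add0n k)).
elim=> [|n IHn] i ink; first by rewrite addn0 in ink; rewrite ink inE.
have ik : i < k by rewrite -ink addnS ltnS leq_addr.
apply/flatten_mapP; exists (g i).
  have [gi_le gg] := g_canon i ik; rewrite size_mkseq inE.
  case: ltngtP gi_le => [gi_lt _|//|-> _ //].
  by rewrite mem_filter mem_iota gi_lt nth_mkseq // gg eqxx orbT.
rewrite -mkseqS ifT; first by apply: IHn; rewrite addSnnS.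
apply/allP=> e eE; apply/implyP; rewrite size_mkseq => e_lt.
have := g_ok e eE (leq_trans e_lt ik).
move: e_lt; rewrite /edge_ok /edge_max !gtn_max => /and3P[e1 e2 e3].
by rewrite !nth_mkseq // (leq_trans _ ik).
Qed.
End PartitionSearch.

Section FirstRepresentative.
Variables (U : eqType) (H : nat -> U) (k : nat).

Definition first_rep (i : nat) : nat := find (fun j => H j == H i) (iota 0 k).

Lemma first_rep_le i : i < k -> first_rep i <= i.
Proof.
move=> ik; rewrite leqNgt; apply/negP => /(before_find 0).
by rewrite nth_iota // add0n eqxx.
Qed.

Lemma first_repE i : i < k -> H (first_rep i) = H i.
Proof.
move=> ik; have hasi : has (fun j => H j == H i) (iota 0 k).
  by apply/hasP; exists i; rewrite ?mem_iota.
have := nth_find 0 hasi; rewrite nth_iota ?add0n => [/eqP //|].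
by move: hasi; rewrite has_find size_iota.
Qed.

Lemma eq_first_rep i l : i < k -> l < k -> (first_rep i == first_rep l) = (H i == H l).
Proof.
move=> ik lk; apply/eqP/eqP => [eq_il|eq_H]; last by rewrite /first_rep eq_H.
by rewrite -first_repE // eq_il first_repE.
Qed.

Lemma first_rep_id i : i < k -> first_rep (first_rep i) = first_rep i.
Proof.
move=> ik; apply/eqP; rewrite eq_first_rep ?first_repE //.
exact: leq_ltn_trans (first_rep_le ik) ik.
Qed.
End FirstRepresentative.

Inductive block := Low | Mid | High.

Definition nat_of_block (b : block) : nat := match b with Low => 0 | Mid => 1 | High => 2 end.
Definition block_of_nat (n : nat) : block := match n with 0 => Low | 1 => Mid | _ => High end.
Lemma nat_of_blockK : cancel nat_of_block block_of_nat. Proof. by case. Qed.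
HB.instance Definition _ := Equality.copy block (can_type nat_of_blockK).

(* A pattern is a vertex written symbolically: its first three entries are
   indices into the values [:: 1; n3; n2; n1] followed by the values of the
   extra blocks, its last entry is the fourth coordinate itself. *)
Definition kernel_patterns : seq (seq nat) :=
  [:: [:: 0; 0; 0; 1]; [:: 0; 0; 0; 0]; [:: 1; 1; 1; 1]; [:: 1; 1; 0; 0];
      [:: 1; 1; 1; 0]; [:: 2; 2; 1; 1]; [:: 2; 0; 0; 0]; [:: 3; 2; 1; 1]].

Definition block_pattern (b : block) (p : nat) : seq (seq nat) :=
  match b with
  | Low => [:: [:: p; p; p; 1]; [:: p; p; p; 0]]
  | Mid => [:: [:: p; p; 1; 1]; [:: p; p; 0; 0]]
  | High => [:: [:: p; 2; 1; 1]; [:: p; 0; 0; 0]]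
  end.

Fixpoint blocks_patterns (bs : seq block) (p : nat) : seq (seq nat) :=
  if bs is b :: bs' then block_pattern b p ++ blocks_patterns bs' p.+1 else [::].

Definition config_patterns (bs : seq block) : seq (seq nat) :=
  kernel_patterns ++ blocks_patterns bs 4.

Definition two_valued_patterns (u v w : seq nat) : bool :=
  all (fun c => two_valued (nth 0 u c) (nth 0 v c) (nth 0 w c)) (iota 0 4).

Definition index_triples (n : nat) : seq triple :=
  [seq (ij.1, ij.2, l) | ij <- [seq (i, j) | i <- iota 0 n, j <- iota 0 n], l <- iota 0 n].

(* Kernel vertices 1, 3, 4 form the extra triple of B. *)
Definition config_edges (vs : seq (seq nat)) : seq triple :=
  (1, 3, 4) :: [seq e <- index_triples (size vs) | (e.1.1 < e.1.2 < e.2) &&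
     two_valued_patterns (nth [::] vs e.1.1) (nth [::] vs e.1.2) (nth [::] vs e.2)].

(* Among the first three coordinates, kernel vertices 1 and 3 agree only in
   the third one, kernel vertices 5 and 7 only in the second and third ones. *)
Definition kernel_coord (U : eqType) (H : nat -> U) : nat :=
  if H 1 == H 3 then 2 else if H 5 == H 7 then 1 else 0.

Definition coord_coloring (vs : seq (seq nat)) (f : seq nat) (m : nat) : bool :=
  all (fun i => all (fun l => (nth 0 f i == nth 0 f l) ==
                              (nth 0 (nth [::] vs i) m == nth 0 (nth [::] vs l) m))
                    (iota 0 (size vs)))
      (iota 0 (size vs)).

Definition pattern_wf (n : nat) (q : seq nat) : bool :=
  [&& size q == 4, nth 0 q 0 < n, nth 0 q 1 < n, nth 0 q 2 < n & nth 0 q 3 <= 1].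

Definition certified (bs : seq block) : bool :=
  let vs := config_patterns bs in
  [&& uniq vs, all (pattern_wf (4 + size bs)) vs &
      all (fun f => coord_coloring vs f (kernel_coord (nth 0 f)))
          (extensions (config_edges vs) (size vs) [::])].

Lemma kernel_coord_lt (U : eqType) (H : nat -> U) : kernel_coord H < 3.
Proof. by rewrite /kernel_coord; case: ifP => //; case: ifP. Qed.

Lemma config_edges_lt vs e : 8 <= size vs -> e \in config_edges vs -> edge_max e < size vs.
Proof.
move=> vs8; rewrite in_cons mem_filter => /orP[/eqP-> |/andP[_]]; first exact: leq_trans vs8.
case/allpairsP=> [[[i j] l] [/allpairsP[[i' j'] [ii' jj' ->]] ll ->]].
by move: ii' jj' ll; rewrite /edge_max !mem_iota !gtn_max /= => -> -> ->.
Qed.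

Lemma certified_coloring bs (U : eqType) (H : nat -> U) : certified bs ->
  (forall e, e \in config_edges (config_patterns bs) -> two_valued (H e.1.1) (H e.1.2) (H e.2)) ->
  forall i l, i < size (config_patterns bs) -> l < size (config_patterns bs) ->
  (H i == H l) = (nth 0 (nth [::] (config_patterns bs) i) (kernel_coord H) ==
                  nth 0 (nth [::] (config_patterns bs) l) (kernel_coord H)).
Proof.
set vs := config_patterns bs; move=> /and3P[_ _ /allP all_coord] H_edges i l ilt llt.
have vs8 : 8 <= size vs by rewrite size_cat leq_addr.
pose g := first_rep H (size vs).
have g_ext : mkseq g (size vs) \in extensions (config_edges vs) (size vs) [::].
  apply: mem_extensions => [j jlt|e eE e_lt].
    by split; [apply: first_rep_le|apply: first_rep_id].
  move: e_lt; rewrite /edge_ok /edge_max !gtn_max => /and3P[e1 e2 e3].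
  by rewrite !nth_mkseq // /two_valued !eq_first_rep //; apply: H_edges.
have := all_coord _ g_ext.
have -> : kernel_coord (nth 0 (mkseq g (size vs))) = kernel_coord H.
  by rewrite /kernel_coord !nth_mkseq ?eq_first_rep // (leq_trans _ vs8).
move/allP/(_ i); rewrite mem_iota ilt => /(_ isT)/allP/(_ l); rewrite mem_iota llt.
by move/(_ isT)/eqP <-; rewrite !nth_mkseq // eq_first_rep.
Qed.

Lemma certified_size_le2 bs : size bs <= 2 -> certified bs.
Proof.
case: bs => [_|b [_|b' [_|? ? //]]]; [|case: b|case: b; case: b']; vm_compute; reflexivity.
Qed.

Definition instantiate (vals q : seq nat) : seq nat :=
  [:: nth 0 vals (nth 0 q 0); nth 0 vals (nth 0 q 1); nth 0 vals (nth 0 q 2); nth 0 q 3].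

Lemma eq_instantiate_coord vals q q' c :
  uniq vals -> pattern_wf (size vals) q -> pattern_wf (size vals) q' -> c < 4 ->
  (nth 0 (instantiate vals q) c == nth 0 (instantiate vals q') c) = (nth 0 q c == nth 0 q' c).
Proof.
move=> uv /and5P[_ q0 q1 q2 _] /and5P[_ q'0 q'1 q'2 _].
by case: c => [|[|[|[|]]]] //= _; rewrite nth_uniq.
Qed.

Lemma instantiate_inj vals :
  uniq vals -> {in pattern_wf (size vals) &, injective (instantiate vals)}.
Proof.
move=> uv q q' wq wq' eqq; have /and5P[/eqP sq _ _ _ _] := wq; have /and5P[/eqP sq' _ _ _ _] := wq'.
apply: (@eq_from_nth _ 0) => [|c]; first by rewrite sq sq'.
by rewrite sq => c4; apply/eqP; rewrite -(eq_instantiate_coord uv wq wq' c4) eqq.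
Qed.

Section Hypergraph.
Variables n1 n2 n3 : nat.
Hypotheses (lt21 : n2 < n1) (lt32 : n3 < n2) (n3_ge2 : 2 <= n3).

Local Notation X := (Xlist n1 n2 n3).
Local Notation V := (Hvert n1 n2 n3).
Local Notation B := (Hedges n1 n2 n3).

Definition base_values : seq nat := [:: 1; n3; n2; n1].

Definition kernel_vectors : seq (seq nat) :=
  [:: [:: 1; 1; 1; 1]; [:: 1; 1; 1; 0]; [:: n3; n3; n3; 1]; [:: n3; n3; 1; 0];
      [:: n3; n3; n3; 0]; [:: n2; n2; n3; 1]; [:: n2; 1; 1; 0]; [:: n1; n2; n3; 1]].

Definition in_block (b : block) (a : nat) : bool :=
  match b with
  | Low => 0 < a <= n3
  | Mid => n3 <= a < n2
  | High => n2 <= a < n1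
  end.

Definition block_pair (b : block) (a : nat) : seq (seq nat) :=
  match b with
  | Low => [:: [:: a; a; a; 1]; [:: a; a; a; 0]]
  | Mid => [:: [:: a; a; n3; 1]; [:: a; a; 1; 0]]
  | High => [:: [:: a; n2; n3; 1]; [:: a; 1; 1; 0]]
  end.

Definition admissible (p : block * nat) : bool := in_block p.1 p.2 && (p.2 \notin base_values).

Definition config_vectors (ps : seq (block * nat)) : seq (seq nat) :=
  kernel_vectors ++ flatten [seq block_pair p.1 p.2 | p <- ps].

Lemma block_pair_sub b a : in_block b a -> {subset block_pair b a <= X}.
Proof.
case: b => /= ab s; rewrite !inE => /orP[]/eqP->; rewrite /Xlist !mem_cat.
- by apply/or4P/Or42/mapP; exists a; rewrite ?mem_iota //; lia.
- by apply/or4P/Or41/mapP; exists a; rewrite ?mem_iota //; lia.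
- apply/or4P/Or44; apply/or4P/Or41/mapP; exists (a - n3); rewrite ?mem_iota; [lia|].
  by rewrite subnKC //; lia.
- apply/or4P/Or43/mapP; exists (a - n3); rewrite ?mem_iota; [lia|].
  by rewrite subnKC //; lia.
- apply/or4P/Or44; apply/or4P/Or43/mapP; exists (a - n2); rewrite ?mem_iota; [lia|].
  by rewrite subnKC //; lia.
- apply/or4P/Or44; apply/or4P/Or42/mapP; exists (a - n2); rewrite ?mem_iota; [lia|].
  by rewrite subnKC //; lia.
Qed.

Lemma top_mem : [:: n1; n2; n3; 1] \in X.
Proof. by rewrite !mem_cat !inE eqxx !orbT. Qed.

Lemma Xlist_blocks s :
  s \in X -> s = [:: n1; n2; n3; 1] \/ exists b a, in_block b a /\ s \in block_pair b a.
Proof.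
rewrite !mem_cat => /or4P[||| /or4P[|||]] /=; try (case/mapP=> k; rewrite mem_iota => kr ->).
- by right; exists Low, k; split; [rewrite /=; lia|rewrite !inE eqxx ?orbT].
- by right; exists Low, k; split; [rewrite /=; lia|rewrite !inE eqxx ?orbT].
- by right; exists Mid, (n3 + k); split; [rewrite /=; lia|rewrite !inE eqxx ?orbT].
- by right; exists Mid, (n3 + k); split; [rewrite /=; lia|rewrite !inE eqxx ?orbT].
- by right; exists High, (n2 + k); split; [rewrite /=; lia|rewrite !inE eqxx ?orbT].
- by right; exists High, (n2 + k); split; [rewrite /=; lia|rewrite !inE eqxx ?orbT].
- by rewrite inE => /eqP; left.
Qed.

Lemma kernel_sub : {subset kernel_vectors <= X}.
Proof.
have mem b a s : in_block b a -> s \in block_pair b a -> s \in X by move/block_pair_sub; apply.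
move=> s; rewrite !inE => /or4P[| | | /or4P[| | | /orP[]]] /eqP->; try exact: top_mem.
- by apply: (mem Low 1); rewrite /= ?inE ?eqxx //; lia.
- by apply: (mem Low 1); rewrite /= ?inE ?eqxx ?orbT //; lia.
- by apply: (mem Low n3); rewrite /= ?inE ?eqxx //; lia.
- by apply: (mem Mid n3); rewrite /= ?inE ?eqxx ?orbT //; lia.
- by apply: (mem Low n3); rewrite /= ?inE ?eqxx ?orbT //; lia.
- by apply: (mem High n2); rewrite /= ?inE ?eqxx //; lia.
- by apply: (mem High n2); rewrite /= ?inE ?eqxx ?orbT //; lia.
Qed.

Lemma boundary_block_sub b a :
  in_block b a -> a \in base_values -> {subset block_pair b a <= kernel_vectors}.
Proof.
rewrite !inE; case: b => /= ab /or4P[]/eqP ea; subst a; try lia;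
  by move=> s; rewrite !inE => /orP[]/eqP->; rewrite !eqxx ?orbT.
Qed.

Lemma Xlist_classify s :
  s \in X -> s \in kernel_vectors \/ exists2 p, admissible p & s \in block_pair p.1 p.2.
Proof.
case/Xlist_blocks => [->|[b [a [ab sba]]]]; first by left; rewrite !inE eqxx !orbT.
have [aB|aB] := boolP (a \in base_values); first by left; apply: boundary_block_sub aB _ sba.
by right; exists (b, a); rewrite /admissible ?ab.
Qed.

Lemma admissible_block_uniq b b' a : admissible (b, a) -> admissible (b', a) -> b = b'.
Proof. by rewrite /admissible !inE; case: b; case: b' => //=; lia. Qed.

Definition coord_bound (j : nat) : nat := nth 0 [:: n1; n2; n3] j.

Lemma Xlist_shape s :
  s \in X -> [/\ size s = 4, forall j, j < 3 -> 0 < nth 0 s j <= coord_bound j & nth 0 s 3 <= 1].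
Proof.
case/Xlist_blocks => [->|[b [a [ab]]]].
  by split=> // -[|[|[|]]] //= _; rewrite /coord_bound /=; lia.
by case: b ab => /= ab; rewrite !inE => /orP[]/eqP->; split=> // -[|[|[|]]] //= _;
   rewrite /coord_bound /=; lia.
Qed.

Lemma Xlist_le s c : s \in X -> nth 0 s c <= n1.
Proof.
case/Xlist_shape => size_s bound_s bit_s.
have [c3|c3] := ltnP c 3.
  by have /andP[_] := bound_s c c3; case: c c3 => [|[|[]]] //= _; rewrite /coord_bound /=; lia.
have [c4|c4] := ltnP c 4; last by rewrite nth_default ?size_s.
have -> : c = 3 by lia.
lia.
Qed.

Lemma mkv_coord s (c : 'I_4) : nth 0 s c <= n1 -> mkv n1 s c = nth 0 s c :> nat.
Proof. by move=> le_s; rewrite ffunE inordK. Qed.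

Lemma eq_mkv_coord s t (c : 'I_4) :
  s \in X -> t \in X -> (mkv n1 s c == mkv n1 t c) = (nth 0 s c == nth 0 t c).
Proof. by move=> sX tX; rewrite -val_eqE /= !mkv_coord ?Xlist_le. Qed.

Lemma mkv_inj : {in X &, injective (mkv n1)}.
Proof.
move=> s t sX tX eq_st; have [size_s _ _] := Xlist_shape sX; have [size_t _ _] := Xlist_shape tX.
apply: (@eq_from_nth _ 0) => [|c]; first by rewrite size_s size_t.
rewrite size_s => c4; apply/eqP.
by rewrite -[c]/(Ordinal c4 : nat) -eq_mkv_coord // eq_st.
Qed.

Lemma instantiate_kernel r :
  map (instantiate (base_values ++ r)) kernel_patterns = kernel_vectors.
Proof. by []. Qed.

Lemma instantiate_block r b p :
  map (instantiate (base_values ++ r)) (block_pattern b p) =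
  block_pair b (nth 0 (base_values ++ r) p).
Proof. by case: b. Qed.

Lemma instantiate_blocks r ps p :
  drop p (base_values ++ r) = unzip2 ps ->
  map (instantiate (base_values ++ r)) (blocks_patterns (unzip1 ps) p) =
  flatten [seq block_pair q.1 q.2 | q <- ps].
Proof.
elim: ps p => [//|[b a] ps IHps] p /= drop_p.
have p_lt : p < size (base_values ++ r) by rewrite -subn_gt0 -size_drop drop_p.
move: drop_p; rewrite (drop_nth 0 p_lt) => -[nth_p drop_p1].
by rewrite map_cat instantiate_block nth_p IHps.
Qed.

Lemma instantiate_config ps :
  map (instantiate (base_values ++ unzip2 ps)) (config_patterns (unzip1 ps)) = config_vectors ps.
Proof. by rewrite map_cat instantiate_kernel instantiate_blocks // drop_size_cat. Qed.

Definition coloring_coord (P : {set {set vec4 n1}}) : nat :=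
  kernel_coord (fun i => pblock P (mkv n1 (nth [::] kernel_vectors i))).

Section Configuration.
Variable ps : seq (block * nat).
Hypotheses (ps_small : size ps <= 2) (ps_adm : all admissible ps) (ps_uniq : uniq (unzip2 ps)).

Let vals := base_values ++ unzip2 ps.
Let vs := config_patterns (unzip1 ps).
Let vecs := config_vectors ps.

Lemma config_values_uniq : uniq vals.
Proof.
rewrite cat_uniq ps_uniq andbT; apply/andP; split; first by rewrite /= !inE; lia.
apply/hasPn => _ /mapP[p p_in ->]; by have /andP[] := allP ps_adm p p_in.
Qed.

Lemma config_certified : certified (unzip1 ps).
Proof. by apply: certified_size_le2; rewrite size_map. Qed.

Lemma size_config : size vecs = size vs.
Proof. by rewrite /vecs -instantiate_config size_map. Qed.

Lemma nth_config i : i < size vs -> nth [::] vecs i = instantiate vals (nth [::] vs i).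
Proof. by move=> i_lt; rewrite /vecs -instantiate_config (nth_map [::]). Qed.

Lemma config_pattern_wf : {subset vs <= pattern_wf (size vals)}.
Proof.
have /and3P[_ /allP wf_vs _] := config_certified.
by rewrite /vals size_cat size_map -(size_map fst ps); apply: wf_vs.
Qed.

Lemma config_sub : {subset vecs <= X}.
Proof.
move=> s; rewrite mem_cat => /orP[/kernel_sub //|/flatten_mapP[p p_in]].
by apply: block_pair_sub; have /andP[] := allP ps_adm p p_in.
Qed.

Lemma config_coord i l c : i < size vs -> l < size vs -> c < 4 ->
  (nth 0 (nth [::] vecs i) c == nth 0 (nth [::] vecs l) c) =
  (nth 0 (nth [::] vs i) c == nth 0 (nth [::] vs l) c).
Proof.
move=> i_lt l_lt c4; rewrite !nth_config // eq_instantiate_coord ?config_values_uniq //;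
  exact/config_pattern_wf/mem_nth.
Qed.

Lemma config_vectors_uniq : uniq vecs.
Proof.
have /and3P[uniq_vs _ _] := config_certified.
rewrite /vecs -instantiate_config map_inj_in_uniq // => q q'.
move=> /config_pattern_wf wq /config_pattern_wf wq'.
exact: instantiate_inj config_values_uniq _ _ wq wq'.
Qed.

Lemma config_edge_mem e : e \in config_edges vs ->
  [set mkv n1 (nth [::] vecs e.1.1); mkv n1 (nth [::] vecs e.1.2);
       mkv n1 (nth [::] vecs e.2)] \in B.
Proof.
have vs8 : 8 <= size vs by rewrite size_cat leq_addr.
move=> eE; have := config_edges_lt vs8 eE; rewrite /edge_max !gtn_max => /and3P[lt1 lt2 lt3].
rewrite in_setU; move: eE; rewrite in_cons mem_filter.
case/orP=> [/eqP-> | /andP[/andP[/andP[lt12 lt23] two_e] _]]; first by rewrite set11 orbT.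
have mem_vecs i : i < size vs -> nth [::] vecs i \in X.
  by move=> i_lt; rewrite config_sub ?mem_nth ?size_config.
apply/orP; left; rewrite inE -andbA; apply/and3P; split.
- apply/subsetP => x; rewrite !inE -!orbA => /or3P[]/eqP->; exact/map_f/mem_vecs.
- rewrite card_set3 //; rewrite (inj_in_eq mkv_inj) ?mem_vecs // nth_uniq ?size_config
    ?config_vectors_uniq //; by rewrite neq_ltn ?lt12 ?lt23 ?(ltn_trans lt12 lt23).
- apply/forallP => c; rewrite imset_set3 card_set3_eq2 /two_valued !eq_mkv_coord ?mem_vecs //.
  rewrite !config_coord //; move/allP: two_e => /(_ c); rewrite mem_iota /=; exact.
Qed.

Lemma config_coloring P : strict_coloring V B P ->
  {in vecs &, forall s t, (pblock P (mkv n1 s) == pblock P (mkv n1 t)) =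
                          (nth 0 s (coloring_coord P) == nth 0 t (coloring_coord P))}.
Proof.
rewrite strict_coloringE => /andP[_ /forallP strict_P] s t.
move=> /(nthP [::])[i i_lt <-] /(nthP [::])[l l_lt <-].
pose H i := pblock P (mkv n1 (nth [::] vecs i)).
have H_edges e : e \in config_edges vs -> two_valued (H e.1.1) (H e.1.2) (H e.2).
  by move=> eE; apply/strict_edge3/(implyP (strict_P _))/config_edge_mem.
have kernel_H : kernel_coord H = coloring_coord P by [].
rewrite size_config in i_lt l_lt.
rewrite -/(H i) -/(H l) (certified_coloring config_certified H_edges) // kernel_H config_coord //.
exact: leq_trans (kernel_coord_lt _) _.
Qed.

End Configuration.

Lemma config_cover s t : s \in X -> t \in X ->
  exists ps, [/\ size ps <= 2, all admissible ps, uniq (unzip2 ps),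
                 s \in config_vectors ps & t \in config_vectors ps].
Proof.
have kernel_mem ps u : u \in kernel_vectors -> u \in config_vectors ps by rewrite mem_cat => ->.
have pair_mem ps p u : p \in ps -> u \in block_pair p.1 p.2 -> u \in config_vectors ps.
  by move=> p_in u_in; rewrite mem_cat; apply/orP; right; apply/flatten_mapP; exists p.
case/Xlist_classify=> [sK|[p p_adm sp]]; case/Xlist_classify=> [tK|[q q_adm tq]].
- by exists [::]; split=> //; apply: kernel_mem.
- exists [:: q]; split=> //=; first by rewrite q_adm.
    exact: kernel_mem.
  exact: pair_mem (mem_head _ _) tq.
- exists [:: p]; split=> //=; first by rewrite p_adm.
    exact: pair_mem (mem_head _ _) sp.
  exact: kernel_mem.
have [eq_pq|ne_pq] := eqVneq p.2 q.2.
  have {}eq_pq : p = q.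
    case: p q p_adm q_adm eq_pq {sp tq} => [b a] [b' a'] /= adm adm' eq_a; subst a'.
    by rewrite (admissible_block_uniq adm adm').
  subst q; exists [:: p]; split=> //=; first by rewrite p_adm.
    exact: pair_mem (mem_head _ _) sp.
  exact: pair_mem (mem_head _ _) tq.
exists [:: p; q]; split=> //=; first by rewrite p_adm q_adm.
- by rewrite inE ne_pq.
- exact: pair_mem (mem_head _ _) sp.
- by apply: pair_mem tq; rewrite !inE eqxx orbT.
Qed.

Lemma strict_coloring_coord P : strict_coloring V B P ->
  {in V &, forall x y, (pblock P x == pblock P y) =
                       (x (inord (coloring_coord P)) == y (inord (coloring_coord P)))}.
Proof.
move=> strict_P x y; rewrite !inE => /mapP[s sX ->] /mapP[t tX ->].
have [ps [ps_small ps_adm ps_uniq s_in t_in]] := config_cover sX tX.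
rewrite (config_coloring ps_small ps_adm ps_uniq strict_P) // eq_mkv_coord // inordK //.
exact: leq_trans (kernel_coord_lt _) _.
Qed.

Definition coord_partition (j : 'I_4) : {set {set vec4 n1}} :=
  preim_partition (fun x : vec4 n1 => x j) V.

Lemma strict_coloring_coord_partition P :
  strict_coloring V B P -> P = coord_partition (inord (coloring_coord P)).
Proof.
move=> strict_P; apply: partition_preimE (strict_coloring_coord strict_P).
by case/andP: strict_P.
Qed.

Lemma coord_partition_strict j : j < 3 -> strict_coloring V B (coord_partition (inord j)).
Proof.
move=> j3; rewrite strict_coloringE preim_partitionP; apply/forallP => E; apply/implyP.
rewrite in_setU => /orP[|/set1P->].
  rewrite inE -andbA => /and3P[EV /eqP cE /forallP/(_ (inord j))/eqP cjE].
  exact: strict_edge_preim.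
have X1 : [:: 1; 1; 1; 0] \in X by apply: kernel_sub; rewrite !inE eqxx ?orbT.
have X3 : [:: n3; n3; 1; 0] \in X by apply: kernel_sub; rewrite !inE eqxx ?orbT.
have X4 : [:: n3; n3; n3; 0] \in X by apply: kernel_sub; rewrite !inE eqxx ?orbT.
apply: strict_edge_preim.
- by apply/subsetP => x; rewrite !inE -!orbA => /or3P[]/eqP->; rewrite map_f.
- by rewrite card_set3 //; rewrite (inj_in_eq mkv_inj) // !eqseq_cons; lia.
- apply/eqP; rewrite imset_set3 card_set3_eq2 /two_valued !eq_mkv_coord // inordK; last by lia.
  by case: j j3 => [|[|[|]]] //= _; lia.
Qed.

Definition coord_witness (v : nat) : seq nat := [:: v; minn v n2; minn v n3; 1].

Lemma coord_witness_mem v : 0 < v <= n1 -> coord_witness v \in X.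
Proof.
move=> v_range; rewrite /coord_witness.
have [v3|v3] := leqP v n3.
  have -> : minn v n2 = v by lia.
  by apply: (@block_pair_sub Low v); rewrite /= ?inE ?eqxx //; lia.
have [v2|v2] := ltnP v n2.
  by apply: (@block_pair_sub Mid v); rewrite /= ?inE ?eqxx //; lia.
have [v1|v1] := ltnP v n1; first by apply: (@block_pair_sub High v); rewrite /= ?inE ?eqxx //; lia.
have -> : v = n1 by lia.
exact: top_mem.
Qed.

Lemma coord_witness_coord v j : j < 3 -> v <= coord_bound j -> nth 0 (coord_witness v) j = v.
Proof. by case: j => [|[|[|]]] //= _; rewrite /coord_bound /=; lia. Qed.

Lemma coord_image j : j < 3 ->
  [set (x : vec4 n1) (inord j) | x in V] = [set inord v.+1 | v : 'I_(coord_bound j)].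
Proof.
move=> j3; have j4 : j < 4 by lia.
have bound_le : coord_bound j <= n1.
  by case: j j3 {j4} => [|[|[|]]] //= _; rewrite /coord_bound /=; lia.
apply/setP => w; apply/imsetP/imsetP => [[x]|[v _ ->]].
  rewrite inE => /mapP[s sX ->] ->; have [_ bound_s _] := Xlist_shape sX.
  have /andP[s_gt0 s_le] := bound_s j j3.
  have v_lt : (nth 0 s j).-1 < coord_bound j by lia.
  exists (Ordinal v_lt) => //; apply: val_inj.
  rewrite /= mkv_coord ?Xlist_le // !inordK ?prednK //; lia.
have v_le : v < coord_bound j by [].
exists (mkv n1 (coord_witness v.+1)); first by rewrite inE map_f // coord_witness_mem //; lia.
apply: val_inj; rewrite /= mkv_coord !inordK ?coord_witness_coord //; lia.
Qed.

Lemma card_coord_partition j : j < 3 -> #|coord_partition (inord j)| = coord_bound j.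
Proof.
move=> j3; have bound_le : coord_bound j <= n1.
  by case: j j3 => [|[|[|]]] //= _; rewrite /coord_bound /=; lia.
have v_lt (v : 'I_(coord_bound j)) : v.+1 < n1.+1 by rewrite ltnS (leq_trans (ltn_ord v)).
rewrite card_preim_partition coord_image // card_imset ?card_ord // => v w /(congr1 val).
by rewrite /= !inordK // => -[/val_inj].
Qed.

Lemma coloring_coord_lt P : coloring_coord P < 3.
Proof. exact: kernel_coord_lt. Qed.

Lemma coord_bound_inj i j : i < 3 -> j < 3 -> coord_bound i = coord_bound j -> i = j.
Proof. by case: i => [|[|[|]]] //; case: j => [|[|[|]]] //; rewrite /coord_bound /=; lia. Qed.

Lemma card_strict_coloring P : strict_coloring V B P -> #|P| = coord_bound (coloring_coord P).
Proof.
move=> strict_P; rewrite {1}(strict_coloring_coord_partition strict_P).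
exact/card_coord_partition/coloring_coord_lt.
Qed.

Lemma strict_colorings_of_size j : j < 3 ->
  [set P | strict_coloring V B P && (#|P| == coord_bound j)] = [set coord_partition (inord j)].
Proof.
move=> j3; apply/setP => P; rewrite !inE; apply/andP/eqP => [[strict_P /eqP card_P]|->].
  rewrite card_strict_coloring // in card_P.
  rewrite (strict_coloring_coord_partition strict_P).
  by rewrite (coord_bound_inj (coloring_coord_lt P) j3 card_P).
by rewrite coord_partition_strict // card_coord_partition.
Qed.

Lemma no_strict_colorings_of_size k :
  k \notin [:: n1; n2; n3] -> [set P | strict_coloring V B P && (#|P| == k)] = set0.
Proof.
move=> kS; apply/setP => P; rewrite !inE; apply/andP => -[strict_P /eqP card_P].
move: (coloring_coord_lt P) kS; rewrite -card_P card_strict_coloring //.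
by case: (coloring_coord P) => [|[|[|m]]] // _; rewrite /coord_bound /= !inE eqxx ?orbT.
Qed.

Lemma num_strict_colorings_Hn k : num_strict_colorings V B k = (k \in [:: n1; n2; n3]).
Proof.
rewrite /num_strict_colorings; have [kS|kS] := boolP (k \in _); last first.
  by rewrite no_strict_colorings_of_size // cards0.
have [j j3 ->] : exists2 j, j < 3 & k = coord_bound j.
  by move: kS; rewrite !inE => /or3P[]/eqP->; [exists 0|exists 1|exists 2].
by rewrite strict_colorings_of_size // cards1.
Qed.

End Hypergraph.

Theorem lemma2p3 (n1 n2 n3 : nat) :
  n1 > n2 -> n2 > n3 -> n3 >= 2 ->
  one_realization (Hvert n1 n2 n3) (Hedges n1 n2 n3) [:: n1; n2; n3].
Proof.
move=> lt21 lt32 n3_ge2; split=> k; rewrite num_strict_colorings_Hn //.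
- by rewrite lt0b.
- exact: leq_b1.
Qed.
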